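(* Let $G=(V,E)$ be a simple undirected graph with $V=[n]$ and let $k\ge 1$ be an integer. The problem $$\max_{Z\in\mathbb S^n,\;X\in\mathbb R^{n\times k}} \langle I,Z\rangle \ \text{ s.t. } Z_{ij}=0\ (\{i,j\}\in E),\ Z_{ii}\le 1\ (i\in[n]),\ Z_{ii}=\sum_{r\in[k]}X_{ir}\ (i\in[n]),\ Z\ge0,\ X\ge 0,\ \begin{bmatrix}I_k&X^{\top}\\ X&Z\end{bmatrix}\succeq0$$ is equivalent to (has the same optimal value as) the problem $$\theta^3_k(G)=\max_{Z\in\mathbb S^n}\langle I,Z\rangle \ \text{ s.t. } Z_{ij}=0\ (\{i,j\}\in E),\ Z_{ii}\le 1\ (i\in[n]),\ Z\ge 0,\ \begin{bmatrix}k&\mathrm{diag}(Z)^{\top}\\ \mathrm{diag}(Z)&Z\end{bmatrix}\succeq 0,$$ and the latter problem is strictly feasible.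
   Context: $\mathbb S^n$ is the space of real symmetric $n\times n$ matrices; $\langle A,B\rangle=\mathrm{trace}(AB)$; $\mathrm{diag}(Z)$ is the vector of diagonal entries of $Z$; $\ge 0$ denotes entrywise nonnegativity and $\succeq0$ positive semidefiniteness. Strict feasibility means there is a feasible $Z$ for which the matrix in the semidefinite constraint is positive definite. *)

From HB Require Import structures.
From mathcomp Require Import all_boot all_order all_algebra.
From mathcomp Require Import classical_sets reals.
Set Implicit Arguments. Unset Strict Implicit. Unset Printing Implicit Defensive.
Import Order.TTheory GRing.Theory Num.Theory.
Local Open Scope ring_scope.

Definition simple_graph (n : nat) (E : rel 'I_n) : Prop :=
  (forall i j, E i j = E j i) /\ (forall i, ~~ E i i).

Definition symmetricmx {R : realFieldType} {m : nat} (A : 'M[R]_m) : Prop :=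
  A^T = A.

Definition psdmx {R : realFieldType} {m : nat} (A : 'M[R]_m) : Prop :=
  symmetricmx A /\ forall v : 'rV[R]_m, 0 <= (v *m A *m v^T) 0 0.

Definition pdmx {R : realFieldType} {m : nat} (A : 'M[R]_m) : Prop :=
  symmetricmx A /\ forall v : 'rV[R]_m, v != 0 -> 0 < (v *m A *m v^T) 0 0.

Definition nonnegmx {R : realFieldType} {m p : nat} (A : 'M[R]_(m, p)) : Prop :=
  forall i j, 0 <= A i j.

Definition diagv {R : pzRingType} {n : nat} (Z : 'M[R]_n) : 'cV[R]_n :=
  \col_i Z i i.

Definition common_feas {R : realFieldType} {n : nat} (E : rel 'I_n) (Z : 'M[R]_n) : Prop :=
  symmetricmx Z /\ (forall i j, E i j -> Z i j = 0) /\ (forall i, Z i i <= 1)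
  /\ nonnegmx Z.

Definition lmi1 {R : realFieldType} {n k : nat} (X : 'M[R]_(n, k)) (Z : 'M[R]_n)
  : 'M[R]_(k + n) := block_mx 1%:M X^T X Z.

Definition feas1 {R : realFieldType} {n k : nat} (E : rel 'I_n)
  (Z : 'M[R]_n) (X : 'M[R]_(n, k)) : Prop :=
  common_feas E Z /\ (forall i, Z i i = \sum_(r < k) X i r) /\ nonnegmx X
  /\ psdmx (lmi1 X Z).

Definition lmi3 {R : realFieldType} {n : nat} (k : nat) (Z : 'M[R]_n)
  : 'M[R]_(1 + n) := block_mx (k%:R)%:M (diagv Z)^T (diagv Z) Z.

Definition feas3 {R : realFieldType} {n : nat} (k : nat) (E : rel 'I_n) (Z : 'M[R]_n) : Prop :=
  common_feas E Z /\ psdmx (lmi3 k Z).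

(* optimal values, as suprema of the objective <I,Z> = tr Z over the feasible sets *)
Definition opt1 {R : realType} (n k : nat) (E : rel 'I_n) : R :=
  sup [set \tr Z | Z in [set Z : 'M[R]_n | exists X : 'M[R]_(n, k), feas1 E Z X]].

Definition theta3 {R : realType} (n k : nat) (E : rel 'I_n) : R :=
  sup [set \tr Z | Z in [set Z : 'M[R]_n | feas3 k E Z]].

Definition strictly_feasible3 {R : realType} (n k : nat) (E : rel 'I_n) : Prop :=
  exists Z : 'M[R]_n, common_feas E Z /\ pdmx (lmi3 k Z).

(* Projection: if [X 1 = diag Z], the congruence by [diag(1^T, I)] maps the
   lifted LMI matrix onto the theta^3 one.  Lifting: for [Z] feasible for
   theta^3 take the even split [X = diag(Z) 1^T / k]; the lifted matrix is then
   the congruence of the theta^3 matrix by [diag(1/k, I)] plus the centering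
   matrix [I - 1 1^T / k] in its top-left block, which is PSD by Cauchy-Schwarz.
   Strict feasibility: for [Z = I/(n+1)] and a vector [(a, w)] with [S = sum w],
   the quadratic form dominates [(a + S/(n+1))^2 + |w|^2/(n+1)^2]. *)

From Pilot Require Import Defs.
From HB Require Import structures.
From mathcomp Require Import all_boot all_order all_algebra.
From mathcomp Require Import classical_sets reals.
From mathcomp Require Import ring lra.
Set Implicit Arguments. Unset Strict Implicit. Unset Printing Implicit Defensive.
Import Order.TTheory GRing.Theory Num.Theory.
Local Open Scope ring_scope.

Definition ones {R : pzRingType} m : 'cV[R]_m := const_mx 1.

Section Psd.
Variable R : realFieldType.

Lemma sqr_sum_le m (x : 'I_m -> R) :
  (\sum_i x i) ^+ 2 <= m%:R * \sum_i x i ^+ 2.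
Proof.
case: m x => [|m] x; first by rewrite !big_ord0 expr0n mul0r.
set S := \sum_i x i; set Q := \sum_i x i ^+ 2; set a : R := m.+1%:R.
have spread : \sum_i (a * x i - S) ^+ 2 = a * (a * Q - S ^+ 2).
  rewrite (eq_bigr (fun i => a ^+ 2 * x i ^+ 2 - 2 * a * S * x i + S ^+ 2))
    => [|i _]; last by ring.
  by rewrite big_split sumrB /= -!mulr_sumr sumr_const card_ord -/S -/Q -mulr_natl; ring.
have : 0 <= \sum_i (a * x i - S) ^+ 2 by apply: sumr_ge0 => i _; exact: sqr_ge0.
by rewrite spread pmulr_rge0 ?ltr0Sn // subr_ge0.
Qed.

Lemma psdmx_congr m p (A : 'M[R]_m) (P : 'M[R]_(p, m)) :
  psdmx A -> psdmx (P *m A *m P^T).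
Proof.
case=> symA posA; split.
  by rewrite /Defs.symmetricmx !trmx_mul trmxK symA mulmxA.
by move=> v; have := posA (v *m P); rewrite trmx_mul !mulmxA.
Qed.

Lemma psdmxD m (A B : 'M[R]_m) : psdmx A -> psdmx B -> psdmx (A + B).
Proof.
case=> symA posA [symB posB]; split; first by rewrite /Defs.symmetricmx raddfD /= symA symB.
by move=> v; rewrite mulmxDr mulmxDl mxE addr_ge0.
Qed.

Lemma mul_rV_ones m (u : 'rV[R]_m) : u *m ones m = (\sum_j u 0 j)%:M.
Proof.
by apply/matrixP => i j; rewrite !ord1 !mxE; apply: eq_bigr => l _; rewrite mxE mulr1.
Qed.

Lemma mul_rV_tr m (u : 'rV[R]_m) : u *m u^T = (\sum_j u 0 j ^+ 2)%:M.
Proof.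
by apply/matrixP => i j; rewrite !ord1 !mxE; apply: eq_bigr => l _; rewrite mxE expr2.
Qed.

Lemma sum_sqr_rV_gt0 m (w : 'rV[R]_m) : w != 0 -> 0 < \sum_j w 0 j ^+ 2.
Proof.
move=> w_neq0; rewrite lt_def sumr_ge0 ?andbT => [|j _]; last exact: sqr_ge0.
apply: contra_neq w_neq0 => /eqP; rewrite psumr_eq0 => [/allP w2_eq0|j _]; last exact: sqr_ge0.
by apply/rowP => j; apply/eqP; rewrite mxE -sqrf_eq0 (eqP (w2_eq0 j _)) ?mem_index_enum.
Qed.

Lemma psdmx_centering k : (0 < k)%N ->
  psdmx (1%:M - (k%:R : R)^-1 *: (ones k *m (ones k)^T)).
Proof.
move=> k_gt0; split.
  by rewrite /Defs.symmetricmx raddfB /= tr_scalar_mx linearZ /= trmx_mul trmxK.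
move=> u; rewrite mulmxBr mulmx1 mulmxBl -scalemxAr -scalemxAl mulmxA.
rewrite -[_ *m (ones k)^T *m u^T]mulmxA -trmx_mul mul_rV_ones tr_scalar_mx.
rewrite mul_rV_tr mul_scalar_mx scale_scalar_mx !mxE eqxx !mulr1n.
rewrite subr_ge0 -expr2 ler_pdivrMl ?ltr0n //; exact: sqr_sum_le.
Qed.

Lemma trmx_ones_mul m : (ones m)^T *m ones m = (m%:R : R)%:M.
Proof.
rewrite mul_rV_ones (eq_bigr (fun=> 1)) ?sumr_const ?card_ord // => j _.
by rewrite /ones !mxE.
Qed.

End Psd.

Section Lift.
Variables (R : realFieldType) (n k : nat).
Implicit Types (Z : 'M[R]_n) (X : 'M[R]_(n, k)).

Lemma lmi3_congr_lmi1 Z X : X *m ones k = diagv Z ->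
  lmi3 k Z = block_mx (ones k)^T 0 0 1%:M *m lmi1 X Z *m (block_mx (ones k)^T 0 0 1%:M)^T.
Proof.
move=> XoneE.
rewrite /lmi1 /lmi3 tr_block_mx trmxK !trmx0 trmx1 !mulmx_block.
rewrite !mul0mx !mulmx0 !mul1mx !mulmx1 !addr0 !add0r trmx_ones_mul.
by rewrite -trmx_mul XoneE.
Qed.

Lemma feas1_feas3 (E : rel 'I_n) Z X : feas1 E Z X -> feas3 k E Z.
Proof.
case=> feasZ [rowsumX [_ psd1]]; split=> //.
have XoneE : X *m ones k = diagv Z.
  apply/matrixP => i j; rewrite !ord1 !mxE rowsumX.
  by apply: eq_bigr => r _; rewrite !mxE mulr1.
by rewrite (lmi3_congr_lmi1 XoneE); exact: psdmx_congr.
Qed.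

Hypothesis k_gt0 : (0 < k)%N.

Let c : R := k%:R^-1.

Let k_mulV : k%:R * c = 1.
Proof. by rewrite mulfV // pnatr_eq0 -lt0n. Qed.

Definition diag_lift Z : 'M[R]_(n, k) := c *: (diagv Z *m (ones k)^T).

Lemma diag_liftE Z i r : diag_lift Z i r = c * Z i i.
Proof. by rewrite !mxE big_ord1 !mxE mulr1. Qed.

Lemma lmi1_diag_liftE Z :
  lmi1 (diag_lift Z) Z =
    block_mx (c *: ones k) 0 0 1%:M *m lmi3 k Z *m (block_mx (c *: ones k) 0 0 1%:M)^T
    + col_mx 1%:M 0 *m (1%:M - c *: (ones k *m (ones k)^T))
        *m (col_mx (1%:M : 'M_k) (0 : 'M_(n, k)))^T.
Proof.
rewrite /lmi1 /lmi3 tr_block_mx tr_col_mx !trmx0 trmx1 !mulmx_block.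
rewrite mul_col_mx mul_col_row.
rewrite !mul0mx !mulmx0 !mul1mx !mulmx1 !addr0 !add0r add_block_mx !addr0.
rewrite !tr_scalar_mx !mulmx1 /diag_lift !linearZ /= trmx_mul trmxK.
congr block_mx.
- rewrite mul_mx_scalar !scalerA k_mulV scale1r scalemxAl scalerN.
  by rewrite addrCA scalemxAl addrN addr0.
- by rewrite scalemxAl.
Qed.

Lemma feas3_feas1 (E : rel 'I_n) Z : feas3 k E Z -> feas1 E Z (diag_lift Z).
Proof.
case=> feasZ psd3; split=> //; split; last split.
- move=> i; under eq_bigr do rewrite diag_liftE.
  by rewrite sumr_const card_ord -mulr_natl mulrA k_mulV mul1r.
- move=> i r; rewrite diag_liftE mulr_ge0 ?invr_ge0 ?ler0n //.
  by case: feasZ => _ [_ [_ ]]; apply.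
- rewrite lmi1_diag_liftE; apply: psdmxD; apply: psdmx_congr => //.
  exact: psdmx_centering.
Qed.

End Lift.

Section StrictFeasibility.
Variables (R : realFieldType) (n k : nat).

Lemma diagv_scalar (e : R) : diagv (e%:M : 'M_n) = e *: ones n.
Proof. by apply/matrixP => i j; rewrite !mxE eqxx mulr1n mulr1. Qed.

Lemma qform_lmi3_scalar (e : R) (u : 'rV[R]_1) (w : 'rV[R]_n) :
  (row_mx u w *m lmi3 k e%:M *m (row_mx u w)^T) 0 0 =
  k%:R * u 0 0 ^+ 2 + 2 * e * u 0 0 * (\sum_j w 0 j) + e * \sum_j w 0 j ^+ 2.
Proof.
rewrite /lmi3 diagv_scalar mul_row_block tr_row_mx mul_row_col !mulmxDl.
rewrite !mul_mx_scalar [(e *: _)^T]linearZ /= -!scalemxAr -!scalemxAl.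
rewrite -[u *m _ *m w^T]mulmxA -trmx_mul !mul_rV_ones !mul_rV_tr.
rewrite tr_scalar_mx mul_scalar_mx mul_mx_scalar !mxE !big_ord1 eqxx !mulr1n.
by change (u 0 ord0) with (u 0 0); ring.
Qed.

Lemma common_feas_scalar (E : rel 'I_n) (d : R) :
  (forall i, ~~ E i i) -> 0 <= d <= 1 -> common_feas E (d%:M : 'M_n).
Proof.
move=> loopless /andP[d_ge0 d_le1]; split; first by rewrite /Defs.symmetricmx tr_scalar_mx.
split.
  by move=> i j; rewrite mxE; case: eqP => [<- | _]; rewrite ?mulr0n // (negbTE (loopless i)).
split; first by move=> i; rewrite mxE eqxx.
by move=> i j; rewrite mxE; case: eqP.
Qed.

Let e : R := n.+1%:R^-1.

Hypothesis k_gt0 : (0 < k)%N.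

Lemma qform_lmi3_scalar_lb (a S Q : R) : S ^+ 2 <= n%:R * Q ->
  (a + e * S) ^+ 2 + e ^+ 2 * Q <= k%:R * a ^+ 2 + 2 * e * a * S + e * Q.
Proof.
move=> cauchy.
have eQE : e * Q = e ^+ 2 * (n%:R * Q) + e ^+ 2 * Q.
  by rewrite /e -natr1; field; rewrite natr1 pnatr_eq0.
have cauchy_e : e ^+ 2 * S ^+ 2 <= e ^+ 2 * (n%:R * Q) by rewrite ler_wpM2l ?sqr_ge0.
have ka : a ^+ 2 <= k%:R * a ^+ 2 by rewrite ler_peMl ?sqr_ge0 ?ler1n.
nra.
Qed.

Lemma pdmx_lmi3_scalar : pdmx (lmi3 k (e%:M : 'M[R]_n)).
Proof.
split; first by rewrite /Defs.symmetricmx /lmi3 tr_block_mx trmxK !tr_scalar_mx.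
move=> v v_neq0; rewrite -(hsubmxK v) qform_lmi3_scalar.
set u := lsubmx v; set w := rsubmx v.
apply: lt_le_trans (qform_lmi3_scalar_lb _ (sqr_sum_le _)).
have e_gt0 : 0 < e by rewrite invr_gt0 ltr0n.
have [w0 | w_neq0] := eqVneq w 0; last first.
  by rewrite ltr_wpDl ?sqr_ge0 // mulr_gt0 ?exprn_gt0 ?sum_sqr_rV_gt0.
have u_neq0 : u != 0.
  by apply: contra_neq v_neq0 => u0; rewrite -(hsubmxK v) -/u -/w u0 w0 row_mx0.
have a_neq0 : u 0 0 != 0.
  by apply: contra_neq u_neq0 => a0; apply/rowP => j; rewrite ord1 a0 mxE.
have -> : \sum_j w 0 j = 0 by rewrite big1 // => j _; rewrite w0 mxE.
have -> : \sum_j w 0 j ^+ 2 = 0 by rewrite big1 // => j _; rewrite w0 mxE expr0n.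
by rewrite !mulr0 !addr0 exprn_even_gt0.
Qed.

Lemma lmi3_strictly_feasible (E : rel 'I_n) : (forall i, ~~ E i i) ->
  exists Z : 'M[R]_n, common_feas E Z /\ pdmx (lmi3 k Z).
Proof.
move=> loopless; exists e%:M; split; last exact: pdmx_lmi3_scalar.
by apply: common_feas_scalar; rewrite // invr_ge0 ler0n invf_le1 ?ler1n ?ltr0n.
Qed.

End StrictFeasibility.

Theorem theorem5 (R : realType) (n k : nat) (E : rel 'I_n) :
  simple_graph E -> (0 < k)%N ->
  @opt1 R n k E = @theta3 R n k E /\ @strictly_feasible3 R n k E.
Proof.
move=> [_ loopless] k_gt0; split; last exact: lmi3_strictly_feasible.
rewrite /opt1 /theta3; congr (sup [set \tr Z | Z in _]).
apply/seteqP; split=> Z /=; first by case=> X; exact: feas1_feas3.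
by move/(feas3_feas1 k_gt0); exists (diag_lift k Z).
Qed.
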